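(* Let $\mathcal T$ be an orbital category and $\mathcal C$ a $\mathcal T$-weak indexing system. Then: (1) $\mathcal C$ has one color if and only if $c(\mathcal C)=\mathcal T$; (2) $\mathcal C$ satisfies the condition ''for all $S\sqcup S'\in\mathcal C_V$, $S,S'\in\mathcal C_V$'' if and only if $\upsilon(\mathcal C)=c(\mathcal C)$; (3) $\mathcal C$ is unital if and only if $\upsilon(\mathcal C)=\mathcal T$; (4) $\mathcal C$ is an indexing system if and only if $\upsilon(\mathcal C)\cap\nabla(\mathcal C)=\mathcal T$.
   Context: For a small category $\mathcal T$, $\mathbb F_{\mathcal T}$ is the full subcategory of $\mathrm{Fun}(\mathcal T^{op},\mathrm{Set})$ on finite coproducts of representables; $\mathcal T$ is orbital if $\mathbb F_{\mathcal T}$ has pullbacks. $\mathbb F_V:=\mathbb F_{\mathcal T,/V}$, $*_V$ terminal, $\emptyset_V$ initial, $n\cdot S$ the $n$-fold coproduct; for $U\to V$ in $\mathcal T$, $\mathrm{Res}^V_U$ is pullback and $\mathrm{Ind}^V_U$ postcomposition. A full $\mathcal T$-subcategory $\mathcal C$ assigns isomorphism-closed classes $\mathcal C_V\subseteq\mathrm{Ob}\,\mathbb F_V$ stable under all restrictions. For $S\in\mathbb F_V$ with orbits $U\in\mathrm{Orb}(S)$ and $T_U\in\mathbb F_U$, $\coprod_U^ST_U:=\coprod_U\mathrm{Ind}_U^VT_U$. A $\mathcal T$-weak indexing system is a full $\mathcal T$-subcategory $\mathcal C$ with $\mathcal C_V\neq\emptyset\Rightarrow *_V\in\mathcal C_V$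 and closed under $\coprod^S_U T_U$ for $S\in\mathcal C_V$, $T_U\in\mathcal C_U$. It has one color if $\mathcal C_V\neq\emptyset$ for all $V$; it is unital if it has one color and $S\sqcup S'\in\mathcal C_V$ implies $S,S'\in\mathcal C_V$; it is an indexing system if every $\mathcal C_V$ is closed under finite coproducts in $\mathbb F_V$. $c(\mathcal C)=\{V\mid *_V\in\mathcal C_V\}$, $\upsilon(\mathcal C)=\{V\mid\emptyset_V\in\mathcal C_V\}$, $\nabla(\mathcal C)=\{V\mid 2\cdot *_V\in\mathcal C_V\}$. *)

From mathcomp Require Import all_boot.
Set Implicit Arguments.
Unset Strict Implicit.
Unset Printing Implicit Defensive.

Record Category := {
  Obj :> Type;
  Hom : Obj -> Obj -> Type;
  cid : forall a, Hom a a;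
  comp : forall a b c, Hom b c -> Hom a b -> Hom a c;
  comp_assoc : forall a b c d (h : Hom c d) (g : Hom b c) (f : Hom a b),
      comp h (comp g f) = comp (comp h g) f;
  comp_id_l : forall a b (f : Hom a b), comp (cid b) f = f;
  comp_id_r : forall a b (f : Hom a b), comp f (cid a) = f
}.
Arguments Hom {c} : rename.
Arguments cid {c} : rename.
Arguments comp {c a b c0} : rename.

Section FT.
Variable T : Category.

(* F_T : finite coproducts of representables in Fun(T^op, Set).        *)
(* An object  coprod_{i in I} y(orb i)  (I a finite type) is recorded   *)
(* by its finite family of orbits.  By Yoneda and since coproducts of   *)
(* presheaves are computed pointwise,                                   *)
(*   Hom(coprod_i y(U_i), coprod_j y(V_j)) = prod_i coprod_j T(U_i,V_j), *)
(* which is the hom-set used below (so this is F_T up to equivalence).  *)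
Record FObj := { idx : finType; orb : idx -> Obj T }.
Arguments orb : clear implicits.

Definition FHom (X Y : FObj) :=
  forall i : idx X, { j : idx Y & Hom (orb X i) (orb Y j) }.

Definition Fid (X : FObj) : FHom X X := fun i => existT _ i (cid _).
Arguments Fid : clear implicits.

Definition Fcomp (X Y Z : FObj) (g : FHom Y Z) (f : FHom X Y) : FHom X Z :=
  fun i => existT _ (projT1 (g (projT1 (f i))))
                    (comp (projT2 (g (projT1 (f i)))) (projT2 (f i))).

Definition Feq (X Y : FObj) (f g : FHom X Y) := forall i, f i = g i.

Definition yo (V : Obj T) : FObj := {| idx := unit; orb := fun _ => V |}.
Definition yoM (U V : Obj T) (phi : Hom U V) : FHom (yo U) (yo V) :=
  fun _ => existT _ tt phi.

Definition is_pullback (P X Y Z : FObj) (p1 : FHom P X) (p2 : FHom P Y)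
  (f : FHom X Z) (g : FHom Y Z) : Prop :=
  Feq (Fcomp f p1) (Fcomp g p2) /\
  forall (Q : FObj) (q1 : FHom Q X) (q2 : FHom Q Y),
    Feq (Fcomp f q1) (Fcomp g q2) ->
    exists u : FHom Q P,
      [/\ Feq (Fcomp p1 u) q1, Feq (Fcomp p2 u) q2 &
          forall u' : FHom Q P, Feq (Fcomp p1 u') q1 -> Feq (Fcomp p2 u') q2 ->
                                Feq u' u].

(* an object of F_V: S in F_T with a structure map S -> y(V), i.e. a    *)
(* morphism orb S i -> V for every orbit i.                              *)
Record Slice (V : Obj T) := { sobj : FObj; sstr : forall i, Hom (orb sobj i) V }.
Arguments sstr {V} _ _.

Definition sstrF V (S : Slice V) : FHom (sobj S) (yo V) :=
  fun i => existT (fun j : idx (yo V) => Hom (orb (sobj S) i) (orb (yo V) j))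
                  tt (sstr S i).
Arguments sstrF {V} S _.

Definition slice_hom V (S S' : Slice V) (f : FHom (sobj S) (sobj S')) :=
  Feq (Fcomp (sstrF S') f) (sstrF S).

Definition slice_iso V (S S' : Slice V) : Prop :=
  exists (f : FHom (sobj S) (sobj S')) (g : FHom (sobj S') (sobj S)),
    [/\ slice_hom f, slice_hom g, Feq (Fcomp g f) (Fid (sobj S)) & Feq (Fcomp f g) (Fid (sobj S'))].

Definition star V : Slice V := {| sobj := yo V; sstr := fun _ => cid V |}.
Definition emptyS V : Slice V :=
  {| sobj := {| idx := void; orb := fun i : void => match i with end |};
     sstr := fun i => match i with end |}.

Definition coprod2 V (S S' : Slice V) : Slice V :=
  {| sobj := {| idx := (idx (sobj S) + idx (sobj S'))%type;
                orb := fun i => match i with inl a => orb (sobj S) a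
                                           | inr b => orb (sobj S') b end |};
     sstr := fun i => match i with inl a => sstr S a | inr b => sstr S' b end |}.

Definition coprodF V (J : finType) (F : J -> Slice V) : Slice V :=
  {| sobj := {| idx := {j : J & idx (sobj (F j))};
                orb := fun k => orb (sobj (F (projT1 k))) (projT2 k) |};
     sstr := fun k => sstr (F (projT1 k)) (projT2 k) |}.

(* coprod^S_U T_U := coprod_U Ind_U^V T_U, for S in F_V and T_U in F_U   *)
(* for every orbit U of S (Ind = postcomposition with U -> V).           *)
Definition coprodInd V (S : Slice V) (Tf : forall i, Slice (orb (sobj S) i))
  : Slice V :=
  {| sobj := {| idx := {i : idx (sobj S) & idx (sobj (Tf i))};
                orb := fun k => orb (sobj (Tf (projT1 k))) (projT2 k) |};
     sstr := fun k => comp (sstr S (projT1 k)) (sstr (Tf (projT1 k)) (projT2 k)) |}.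

Definition orbital : Prop :=
  forall (X Y Z : FObj) (f : FHom X Z) (g : FHom Y Z),
    exists (P : FObj) (p1 : FHom P X) (p2 : FHom P Y), is_pullback p1 p2 f g.

Definition TClass := forall V : Obj T, Slice V -> Prop.

(* full T-subcategory: iso-closed and stable under all restrictions     *)
(* Res^V_U (pullback along y(U) -> y(V), for any choice of pullback).   *)
Definition full_Tsub (C : TClass) : Prop :=
  (forall V (S S' : Slice V), slice_iso S S' -> C V S -> C V S') /\
  (forall U V (phi : Hom U V) (S : Slice V) (P : FObj)
          (p1 : FHom P (sobj S)) (p2 : FHom P (yo U)),
      is_pullback p1 p2 (sstrF S) (yoM phi) ->
      C V S -> C U {| sobj := P; sstr := fun i => projT2 (p2 i) |}).

Definition weak_indexing_system (C : TClass) : Prop :=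
  [/\ full_Tsub C,
      (forall V, (exists S, C V S) -> C V (star V)) &
      (forall V (S : Slice V) (Tf : forall i, Slice (orb (sobj S) i)),
          C V S -> (forall i, C (orb (sobj S) i) (Tf i)) -> C V (coprodInd Tf))].

Definition one_color (C : TClass) : Prop := forall V, exists S, C V S.

Definition summand_closed (C : TClass) : Prop :=
  forall V (S S' : Slice V), C V (coprod2 S S') -> C V S /\ C V S'.

Definition unital (C : TClass) : Prop := one_color C /\ summand_closed C.

Definition indexing_system (C : TClass) : Prop :=
  weak_indexing_system C /\
  forall V (J : finType) (F : J -> Slice V), (forall j, C V (F j)) -> C V (coprodF F).

(* c(C), υ(C), ∇(C) as predicates on objects of T *)
Definition colors (C : TClass) (V : Obj T) : Prop := C V (star V).
Definition upsilon (C : TClass) (V : Obj T) : Prop := C V (emptyS V).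
Definition nabla (C : TClass) (V : Obj T) : Prop := C V (coprod2 (star V) (star V)).

End FT.

From Pilot Require Import Defs.
From mathcomp Require Import all_boot.

(* Everything follows from closure of C under isomorphisms and
   under the operation ∐^S.  Restricting S ∈ C_V along an orbit U -> V (a
   pullback, which exists since T is orbital) shows C_U ≠ ∅, hence *_U ∈ C_U.
   So if ∅_U ∈ C_U for every colour U, a summand S of S ⊔ S' ∈ C_V is
   ∐^{S ⊔ S'} of *_U on the orbits of S and ∅_U on those of S'; conversely
   *_V ≅ *_V ⊔ ∅_V.  For (4), ∐_j S_j ≅ ∐^{J·*_V} S_j, and J·*_V is built
   from ∅_V and 2·*_V by induction on |J|: (n+1)·*_V is ∐^{2·*_V} of *_V
   and n·*_V. *)

(* [ssrfun.comp] would otherwise shadow the categorical composition. *)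
Local Notation comp := Defs.comp.
Local Notation orbit S i := (orb (f := sobj S) i).

Lemma eq_card_bij (A B : finType) : #|A| = #|B| -> exists f : A -> B, bijective f.
Proof.
move=> eqAB; exists (fun a => enum_val (cast_ord eqAB (enum_rank a))).
apply: inj_card_bij; last by rewrite eqAB.
by move=> a a' /enum_val_inj/cast_ord_inj/enum_rank_inj.
Qed.

Section SliceIsomorphisms.
Context {T : Category} {V : Obj T}.
Implicit Types S : Slice V.

Lemma slice_iso_of {S S'} (f : idx (sobj S) -> idx (sobj S'))
    (g : idx (sobj S') -> idx (sobj S))
    (hf : forall i, Hom (orbit S i) (orbit S' (f i)))
    (hg : forall j, Hom (orbit S' j) (orbit S (g j))) :
  (forall i, comp (sstr (f i)) (hf i) = sstr i) ->
  (forall j, comp (sstr (g j)) (hg j) = sstr j) ->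
  (forall i, existT (fun i' => Hom (orbit S i) (orbit S i'))
                    (g (f i)) (comp (hg (f i)) (hf i)) = existT _ i (cid _)) ->
  (forall j, existT (fun j' => Hom (orbit S' j) (orbit S' j'))
                    (f (g j)) (comp (hf (g j)) (hg j)) = existT _ j (cid _)) ->
  slice_iso S S'.
Proof.
move=> hfV hgV gfK fgK.
exists (fun i => existT _ (f i) (hf i)), (fun j => existT _ (g j) (hg j)).
by split=> i; rewrite /Fcomp /sstrF /= ?hfV ?hgV ?gfK ?fgK.
Qed.

Lemma coprod2C_iso S S' : slice_iso (coprod2 S S') (coprod2 S' S).
Proof.
pose swap A B (k : A + B) := match k with inl a => inr a | inr b => inl b end.
unshelve eapply (@slice_iso_of (coprod2 S S') (coprod2 S' S) (swap _ _) (swap _ _)).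
- by case=> i; exact: cid.
- by case=> i; exact: cid.
- by case=> i /=; rewrite comp_id_r.
- by case=> i /=; rewrite comp_id_r.
- by case=> i /=; rewrite comp_id_l.
- by case=> i /=; rewrite comp_id_l.
Qed.

Lemma coprod2_empty_iso S : slice_iso S (coprod2 S (emptyS V)).
Proof.
unshelve eapply (@slice_iso_of S (coprod2 S (emptyS V)) inl).
- by case=> [i|[]].
- by move=> i; exact: cid.
- by case=> [i|[]]; exact: cid.
- by move=> i /=; rewrite comp_id_r.
- by case=> [i|[]] /=; rewrite comp_id_r.
- by move=> i /=; rewrite comp_id_l.
- by case=> [i|[]] /=; rewrite comp_id_l.
Qed.

Lemma coprodF_void_iso (F : void -> Slice V) : slice_iso (coprodF F) (emptyS V).
Proof.
by unshelve eapply (@slice_iso_of (coprodF F) (emptyS V)); do ?case.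
Qed.

Lemma coprodF_bool_iso S S' :
  slice_iso (coprodF (fun b : bool => if b then S else S')) (coprod2 S S').
Proof.
unshelve eapply (@slice_iso_of (coprodF _) (coprod2 S S')).
- by case=> [[] i]; [exact: inl i | exact: inr i].
- by case=> i; [exact: existT _ true i | exact: existT _ false i].
- by case=> [[] i]; exact: cid.
- by case=> i; exact: cid.
- by case=> [[] i] /=; rewrite comp_id_r.
- by case=> i /=; rewrite comp_id_r.
- by case=> [[] i] /=; rewrite comp_id_l.
- by case=> i /=; rewrite comp_id_l.
Qed.

Definition coprod2_family {S S'} (Tl : forall i, Slice (orbit S i))
    (Tr : forall i, Slice (orbit S' i)) : forall i, Slice (orbit (coprod2 S S') i) :=
  fun i => match i with inl a => Tl a | inr b => Tr b end.

Lemma coprodInd_summand_iso S S' :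
  slice_iso (coprodInd (coprod2_family (fun i => star (orbit S i))
                                       (fun i => emptyS (orbit S' i)))) S.
Proof.
unshelve eapply (@slice_iso_of (coprodInd _) S).
- by case=> [[i|i] k] //=; case: k.
- by move=> i; exact: existT _ (inl i) tt.
- by case=> [[i|i] k] /=; [exact: cid | case: k].
- by move=> i; exact: cid.
- by case=> [[i|i] []] /=; rewrite !comp_id_r.
- by move=> i /=; rewrite !comp_id_r.
- by case=> [[i|i] []] /=; rewrite comp_id_l.
- by move=> i /=; rewrite comp_id_l.
Qed.

Definition nstar (J : finType) : Slice V :=
  {| sobj := {| idx := J; orb := fun _ => V |}; sstr := fun _ => cid V |}.

Lemma nstar_card_iso (J K : finType) : #|J| = #|K| -> slice_iso (nstar J) (nstar K).
Proof.
move=> /eq_card_bij[f [g fK gK]].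
apply: (@slice_iso_of (nstar J) (nstar K) f g (fun _ => cid V) (fun _ => cid V)) => i /=;
  by rewrite comp_id_l ?fK ?gK.
Qed.

Lemma emptyS_nstar_iso : slice_iso (emptyS V) (nstar void).
Proof. by unshelve eapply (@slice_iso_of (emptyS V) (nstar void) id id); case. Qed.

Lemma coprodInd_nstar_succ_iso (J : finType) :
  slice_iso (coprodInd (@coprod2_family (star V) (star V)
                                         (fun _ => star V) (fun _ => nstar J)))
            (nstar (option J)).
Proof.
unshelve eapply (@slice_iso_of (coprodInd _) (nstar (option J))).
- by case=> [[[]|[]] j]; [exact: None | exact: Some j].
- by case=> [j|]; [exact: existT _ (inr tt) j | exact: existT _ (inl tt) tt].
- by case=> [[[]|[]] j]; exact: cid.
- by case=> [j|]; exact: cid.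
- by case=> [[[]|[]] j] /=; rewrite !comp_id_l.
- by case=> [j|] /=; rewrite !comp_id_l.
- by case=> [[[]|[]] j] //=; [case: j|]; rewrite comp_id_l.
- by case=> [j|] /=; rewrite comp_id_l.
Qed.

Lemma coprodInd_nstar_iso {J : finType} (F : J -> Slice V) :
  slice_iso (coprodInd (S := nstar J) F) (coprodF F).
Proof.
by apply: (@slice_iso_of (coprodInd (S := nstar J) F) (coprodF F) id id
  (fun _ => cid _) (fun _ => cid _)) => i /=; rewrite comp_id_l ?comp_id_r.
Qed.

End SliceIsomorphisms.

Arguments nstar {T} V J.

Section WeakIndexingSystems.
Variables (T : Category) (C : TClass T).
Hypothesis HC : weak_indexing_system C.

Lemma wis_iso_closed {V : Obj T} {S S' : Slice V} : slice_iso S S' -> C V S -> C V S'.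
Proof. by case: HC => [[isoC _] _ _]; apply: isoC. Qed.

Lemma wis_colors {V : Obj T} {S : Slice V} : C V S -> colors C V.
Proof. by case: HC => [_ starC _] CS; apply: starC; exists S. Qed.

Lemma wis_coprodInd {V : Obj T} {S : Slice V} {Tf : forall i, Slice (orbit S i)} :
  C V S -> (forall i, C (orbit S i) (Tf i)) -> C V (coprodInd Tf).
Proof. by case: HC => [_ _ indC]; apply: indC. Qed.

Lemma wis_orbit_colors (HT : orbital T) {V : Obj T} {S : Slice V} :
  C V S -> forall i, colors C (orbit S i).
Proof.
move=> CS i; have [P [p1 [p2 pbP]]] := HT _ _ _ (sstrF (S := S)) (yoM (sstr i)).
case: HC => [[_ resC] _ _].
exact: wis_colors (resC _ _ _ _ _ _ _ pbP CS).
Qed.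

Lemma wis_nstar {V : Obj T} : upsilon C V -> nabla C V -> forall J, C V (nstar V J).
Proof.
move=> emptyC twoC.
suff nstar_ord n : C V (nstar V 'I_n).
  move=> J; apply: wis_iso_closed (nstar_ord #|J|).
  by apply: nstar_card_iso; rewrite card_ord.
elim: n => [|n IHn].
  have nstar_void : C V (nstar V void) := wis_iso_closed emptyS_nstar_iso emptyC.
  by apply: wis_iso_closed nstar_void; apply: nstar_card_iso; rewrite card_void card_ord.
have nstar_succ : C V (nstar V (option 'I_n)).
  apply: wis_iso_closed (coprodInd_nstar_succ_iso 'I_n) _.
  by apply: wis_coprodInd (twoC) _ => -[] [] //=; exact: wis_colors twoC.
by apply: wis_iso_closed nstar_succ; apply: nstar_card_iso; rewrite card_option !card_ord.
Qed.

Lemma one_color_iff_colors : one_color C <-> forall V, colors C V.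
Proof.
split=> [colC V | colC V]; last by exists (star V); apply: colC.
by have [S CS] := colC V; apply: wis_colors CS.
Qed.

Lemma summand_closed_iff (HT : orbital T) :
  summand_closed C <-> forall V, upsilon C V <-> colors C V.
Proof.
split=> [sumC V | emptyC].
  split; first exact: wis_colors.
  by move/(wis_iso_closed (coprod2_empty_iso (star V)))/sumC => [].
suff leftC V (S S' : Slice V) : C V (coprod2 S S') -> C V S.
  move=> V S S' CSS'; split; first exact: leftC CSS'.
  exact: leftC (wis_iso_closed (coprod2C_iso S S') CSS').
move=> CSS'; apply: wis_iso_closed (coprodInd_summand_iso S S') _.
apply: (wis_coprodInd CSS') => -[i|i] /=.
- exact: (wis_orbit_colors HT CSS' (inl i)).
- exact/emptyC/(wis_orbit_colors HT CSS' (inr i)).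
Qed.

Lemma unital_iff (HT : orbital T) : unital C <-> forall V, upsilon C V.
Proof.
split=> [[oneC sumC] V | emptyC].
  exact/((summand_closed_iff HT).1 sumC)/(one_color_iff_colors.1 oneC).
have colC V : colors C V := wis_colors (emptyC V).
split; first exact/one_color_iff_colors.
by apply/(summand_closed_iff HT) => V; split=> _; [exact: colC | exact: emptyC].
Qed.

Lemma indexing_system_iff : indexing_system C <-> forall V, upsilon C V /\ nabla C V.
Proof.
split=> [[_ coprodC] V | emptyTwoC].
  have emptyC : upsilon C V.
    apply: wis_iso_closed (coprodF_void_iso (fun v : void => match v with end)) _.
    by apply: coprodC; case.
  split=> //; apply: wis_iso_closed (coprodF_bool_iso _ _) _.
  by apply: coprodC => -[] /=; exact: wis_colors emptyC.
split=> // V J F CF; have [emptyC twoC] := emptyTwoC V.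
apply: wis_iso_closed (coprodInd_nstar_iso F) _.
exact: wis_coprodInd (wis_nstar emptyC twoC J) CF.
Qed.

End WeakIndexingSystems.

Theorem mainTheorem6 (T : Category) (HT : orbital T) (C : TClass T)
  (HC : weak_indexing_system C) :
  [/\ (one_color C <-> forall V : Obj T, colors C V),
      (summand_closed C <-> forall V : Obj T, upsilon C V <-> colors C V),
      (unital C <-> forall V : Obj T, upsilon C V) &
      (indexing_system C <-> forall V : Obj T, upsilon C V /\ nabla C V)].
Proof.
split.
- exact: one_color_iff_colors.
- exact: summand_closed_iff.
- exact: unital_iff.
- exact: indexing_system_iff.
Qed.
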